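(* Let $X$ be a topological group with identity $e$, equipped with a proper length function $\ell:X\to[0,\infty)$. Let $\mathcal H$ be a Hilbert space, let $U:X\to\mathcal U(\mathcal H)$ be a unitary representation of $X$, and let $\{x_j\}_{j\in J}$ be a net in $X$ with $x_j\to\infty$. Assume there exists a self-adjoint operator $A$ in $\mathcal H$ such that $U(x_j)\in C^1(A)$ for each $j\in J$, and suppose that the strong limit $$D:=\operatorname{s-lim}_j\frac{1}{\ell(x_j)}[A,U(x_j)]U(x_j)^{-1}$$ exists. Then: (a) $\lim_j\langle\varphi,U(x_j)\psi\rangle=0$ for all $\varphi\in\ker(D)^\perp$ and $\psi\in\mathcal H$; (b) $U$ has no nontrivial finite-dimensional unitary subrepresentation in $\ker(D)^\perp$, i.e. there is no nonzero finite-dimensional subspace of $\ker(D)^\perp$ invariant under all $U(x)$, $x\in X$.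
   Context: $\mathcal U(\mathcal H)$ is the group of unitary operators on $\mathcal H$; the scalar product is antilinear in the first argument. A proper length function is a map $\ell:X\to[0,\infty)$ with: (L1) $\ell(e)=0$; (L2) $\ell(x^{-1})=\ell(x)$ for all $x$; (L3) $\ell(xy)\le\ell(x)+\ell(y)$ for all $x,y$; (L4) for every compact $K\subset[0,\infty)$, $\ell^{-1}(K)$ is relatively compact in $X$. A net $\{x_j\}$ in $X$ diverges to infinity ($x_j\to\infty$) if it has no limit (cluster) point in $X$. For a self-adjoint operator $A$ and bounded $S$, $S\in C^1(A)$ means $t\mapsto e^{-itA}Se^{itA}$ is strongly $C^1$; equivalently the form $\mathrm{dom}(A)\ni\varphi\mapsto\langle A\varphi,S\varphi\rangle-\langle\varphi,SA\varphi\rangle$ is continuous for the topology of $\mathcal H$, and $[A,S]$ denotes the bounded operator associated with its continuous extension. *)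

From mathcomp Require Import all_boot all_order all_algebra.
From mathcomp Require Import all_classical all_reals topology normedtype.
From mathcomp Require Import complex.
Set Implicit Arguments. Unset Strict Implicit. Unset Printing Implicit Defensive.
Import Order.TTheory GRing.Theory Num.Theory.
Import numFieldTopology.Exports numFieldNormedType.Exports.
Local Open Scope ring_scope.
Local Open Scope classical_set_scope.

Section HilbertDefs.
Variables (R : realType) (H : lmodType R[i]) (ip : H -> H -> R[i]).

Definition hnorm (x : H) : R[i] := sqrtC (ip x x).

(* complex Hilbert space; scalar product antilinear in the first argument *)
Definition is_hilbert : Prop :=
  [/\ (forall (a : R[i]) (x y z : H), ip x (a *: y + z) = a * ip x y + ip x z),
      (forall x y : H, ip y x = (ip x y)^*),
      (forall x : H, 0 <= ip x x),
      (forall x : H, ip x x = 0 -> x = 0) &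
      (forall u : nat -> H,
         (forall eps : R[i], 0 < eps -> exists N, forall m n, (N <= m)%N -> (N <= n)%N ->
             hnorm (u m - u n) < eps) ->
         exists l : H, forall eps : R[i], 0 < eps -> exists N, forall n, (N <= n)%N ->
             hnorm (u n - l) < eps)].

Definition is_linear_op (S : H -> H) : Prop :=
  forall (a : R[i]) (u v : H), S (a *: u + v) = a *: S u + S v.

Definition is_bounded_op (S : H -> H) : Prop :=
  is_linear_op S /\ exists M : R[i], forall u, hnorm (S u) <= M * hnorm u.

Definition is_unitary (S : H -> H) : Prop :=
  [/\ is_linear_op S, (forall u v, ip (S u) (S v) = ip u v) &
      (forall v, exists u, S u = v)].

(* self-adjoint (possibly unbounded) operator A with domain domA:
   domA is a dense subspace, A is linear on it, and A = A^star where
   dom(A^star) = {psi | exists eta, forall phi in domA, <psi, A phi> = <eta, phi>},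
   A^star psi = that eta. *)
Definition is_selfadjoint (domA : set H) (A : H -> H) : Prop :=
  [/\ domA 0 /\ (forall (a : R[i]) u v, domA u -> domA v -> domA (a *: u + v)),
      (forall (a : R[i]) u v, domA u -> domA v -> A (a *: u + v) = a *: A u + A v),
      (forall (x : H) (eps : R[i]), 0 < eps -> exists y, domA y /\ hnorm (x - y) < eps),
      (forall psi : H, domA psi <->
          exists eta : H, forall phi, domA phi -> ip psi (A phi) = ip eta phi) &
      (forall psi phi : H, domA psi -> domA phi -> ip psi (A phi) = ip (A psi) phi)].

Definition comm_form (A S : H -> H) (phi psi : H) : R[i] :=
  ip (A phi) (S psi) - ip phi (S (A psi)).

Definition in_C1 (domA : set H) (A S : H -> H) : Prop :=
  exists c : R[i], forall phi psi, domA phi -> domA psi ->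
    `|comm_form A S phi psi| <= c * hnorm phi * hnorm psi.

(* T = [A, S]: the bounded operator associated with the continuous extension of the form *)
Definition is_commutator (domA : set H) (A S T : H -> H) : Prop :=
  is_bounded_op T /\
  forall phi psi, domA phi -> domA psi -> ip phi (T psi) = comm_form A S phi psi.

Definition ker_perp (D : H -> H) : set H :=
  [set phi | forall v, D v = 0 -> ip v phi = 0].

Definition span_of (s : seq H) : set H :=
  [set v | exists c : 'I_(size s) -> R[i], v = \sum_(i < size s) c i *: nth 0 s i].

End HilbertDefs.

Section NetDefs.
Variables (J : Type) (le : J -> J -> Prop).

Definition is_directed : Prop :=
  [/\ (exists j : J, True), (forall j, le j j),
      (forall i j k, le i j -> le j k -> le i k) &
      (forall i j, exists k, le i k /\ le j k)].

Definition net_cluster {X : topologicalType} (x : J -> X) (p : X) : Prop :=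
  forall N, nbhs p N -> forall j, exists k, le j k /\ N (x k).

(* x_j -> infinity *)
Definition net_diverges {X : topologicalType} (x : J -> X) : Prop :=
  ~ exists p, net_cluster x p.

Definition net_cvgC (R : realType) (z : J -> R[i]) (l : R[i]) : Prop :=
  forall eps : R[i], 0 < eps -> exists j0, forall j, le j0 j -> `|z j - l| < eps.

Definition net_slim (R : realType) (H : lmodType R[i]) (ip : H -> H -> R[i])
    (T : J -> H -> H) (D : H -> H) : Prop :=
  forall psi : H, forall eps : R[i], 0 < eps -> exists j0, forall j, le j0 j ->
    hnorm ip (T j psi - D psi) < eps.
End NetDefs.

Section GroupDefs.
Variables (X : topologicalType) (mul : X -> X -> X) (inv : X -> X) (e : X).

Definition is_topological_group : Prop :=
  [/\ (forall x y z, mul x (mul y z) = mul (mul x y) z),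
      (forall x, mul e x = x /\ mul x e = x),
      (forall x, mul (inv x) x = e /\ mul x (inv x) = e),
      continuous (fun p : X * X => mul p.1 p.2) &
      continuous inv].

Definition is_proper_length (R : realType) (l : X -> R) : Prop :=
  [/\ (forall x, 0 <= l x), l e = 0,
      (forall x, l (inv x) = l x),
      (forall x y, l (mul x y) <= l x + l y) &
      (forall K : set R, compact K -> K `<=` [set r | 0 <= r] ->
          compact (closure (l @^-1` K)))].

Definition is_unitary_rep (R : realType) (H : lmodType R[i]) (ip : H -> H -> R[i])
    (U : X -> H -> H) : Prop :=
  [/\ (forall x, is_unitary ip (U x)),
      U e = id,
      (forall x y, U (mul x y) = U x \o U y) &
      (forall (v : H) (x0 : X) (eps : R[i]), 0 < eps ->
          \forall x \near x0, hnorm ip (U x v - U x0 v) < eps)].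
End GroupDefs.

From mathcomp Require Import all_boot all_order all_algebra.
From mathcomp Require Import all_classical all_reals topology normedtype.
From mathcomp Require Import complex.
From mathcomp Require Import ring lra.
Import Order.TTheory GRing.Theory Num.Theory.
Import numFieldTopology.Exports numFieldNormedType.Exports.
Local Open Scope ring_scope.
Local Open Scope classical_set_scope.
Local Notation "x %:C" := (real_complex _ x) : ring_scope.

(* The operators [T_j = l(x_j)^-1 [A, U(x_j)] U(x_j)^-1] are symmetric: on [dom A]
   by the commutator identity, then everywhere by density and boundedness; hence
   so is their strong limit [D]. For [v, psi] in [dom A], symmetry gives
   [<T_j v, U(x_j) psi> = l(x_j)^-1 (<A v, U(x_j) psi> - <v, U(x_j) A psi>)], and
   [l(x_j) -> oo] because [l] is proper and [x_j] diverges, so the matrix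
   coefficients of [D v] vanish at infinity. The vectors whose coefficients vanish
   form a closed subspace containing [D (dom A)]; by symmetry of [D] and density of
   [dom A] its orthogonal complement lies in [ker D], which gives (a). For (b), if
   [V] in [ker(D)^perp] is finite-dimensional and invariant with orthogonal basis
   [(e_k)], then [|v|^2 = |U(x_j) v|^2 = sum_k |<e_k, U(x_j) v>|^2 / |e_k|^2 -> 0]. *)

Section InnerProduct.
Variables (R : realType) (H : lmodType R[i]) (ip : H -> H -> R[i]).
Hypothesis hH : is_hilbert ip.

Lemma ipr_linear a x y z : ip x (a *: y + z) = a * ip x y + ip x z.
Proof. by case: hH. Qed.
Lemma ipC x y : ip y x = (ip x y)^*.
Proof. by case: hH. Qed.
Lemma ipxx_ge0 x : 0 <= ip x x.
Proof. by case: hH. Qed.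
Lemma ipxx_eq0 x : ip x x = 0 -> x = 0.
Proof. by case: hH => _ _ _ /(_ x). Qed.

Lemma ipr0 x : ip x 0 = 0.
Proof.
have := ipr_linear 1 x 0 0; rewrite scaler0 addr0 mul1r => h.
by apply: (addrI (ip x 0)); rewrite addr0 -h.
Qed.
Lemma ipDr x y z : ip x (y + z) = ip x y + ip x z.
Proof. by have := ipr_linear 1 x y z; rewrite scale1r mul1r. Qed.
Lemma ipZr x a y : ip x (a *: y) = a * ip x y.
Proof. by have := ipr_linear a x y 0; rewrite !addr0 ipr0 addr0. Qed.
Lemma ipNr x y : ip x (- y) = - ip x y.
Proof. by rewrite -scaleN1r ipZr mulN1r. Qed.
Lemma ipBr x y z : ip x (y - z) = ip x y - ip x z.
Proof. by rewrite ipDr ipNr. Qed.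
Lemma ip0l x : ip 0 x = 0.
Proof. by rewrite ipC ipr0 conjC0. Qed.
Lemma ipDl x y z : ip (y + z) x = ip y x + ip z x.
Proof. by rewrite [ip y x]ipC [ip z x]ipC [ip (y+z) x]ipC ipDr rmorphD. Qed.
Lemma ipZl x a y : ip (a *: y) x = a^* * ip y x.
Proof. by rewrite [ip y x]ipC [ip (a *: y) x]ipC ipZr rmorphM. Qed.
Lemma ipNl x y : ip (- y) x = - ip y x.
Proof. by rewrite -scaleN1r ipZl rmorphN rmorph1 mulN1r. Qed.
Lemma ipBl x y z : ip (y - z) x = ip y x - ip z x.
Proof. by rewrite ipDl ipNl. Qed.
Lemma ip_sumr x (I : Type) (s : seq I) (F : I -> H) :
  ip x (\sum_(i <- s) F i) = \sum_(i <- s) ip x (F i).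
Proof.
elim: s => [|a s IH]; first by rewrite !big_nil ipr0.
by rewrite !big_cons ipDr IH.
Qed.

Lemma hnorm_ge0 x : 0 <= hnorm ip x.
Proof. by rewrite /hnorm sqrtC_ge0 ipxx_ge0. Qed.
Lemma hnorm_sq x : hnorm ip x ^+ 2 = ip x x.
Proof. by rewrite /hnorm sqrtCK. Qed.

Lemma cauchy_schwarz a b : `|ip a b| <= hnorm ip a * hnorm ip b.
Proof.
have [a0|aa0] := eqVneq (ip a a) 0.
  by rewrite (ipxx_eq0 _ a0) ip0l normr0 mulr_ge0 // hnorm_ge0.
have aap : 0 < ip a a by rewrite lt_def aa0 ipxx_ge0.
set z := ip a b.
have key : `|z| ^+ 2 <= ip a a * ip b b.
  pose t := z / ip a a.
  have := ipxx_ge0 (b - t *: a).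
  rewrite ipBl !ipBr !ipZl !ipZr (ipC a b) -/z.
  have -> : t^* = z^* / ip a a.
    have ipaa : (ip a a)^* = ip a a by rewrite -ipC.
    by rewrite /t rmorphM fmorphV; congr (_ * _^-1); exact: ipaa.
  rewrite /t normCK => h.
  have h2 := mulr_ge0 (ltW aap) h.
  rewrite -subr_ge0; apply: le_trans h2 _; rewrite le_eqVlt; apply/orP; left; apply/eqP.
  field; exact: aa0.
rewrite -(sqrCK (normr_ge0 z)) /hnorm -sqrtCM ?nnegrE ?ipxx_ge0 //.
by rewrite ler_sqrtC // nnegrE ?exprn_ge0 ?mulr_ge0 ?ipxx_ge0.
Qed.

(* Real-valued norm and modulus, so that [lra] and [nra] apply. *)
Definition vnorm x : R := complex.Re (hnorm ip x).
Definition cabs (z : R[i]) : R := complex.Re `|z|.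

Lemma conj_real (x : R) : (x%:C)^* = x%:C.
Proof. by change (Complex x (- 0) = Complex x 0); rewrite oppr0. Qed.
Lemma ge0_ReE (c : R[i]) : 0 <= c -> c = (complex.Re c)%:C.
Proof. by case: c => a b; rewrite lecE /= => /andP[/eqP -> _]. Qed.
Lemma gt0_ReE (c : R[i]) : 0 < c -> c = (complex.Re c)%:C /\ 0 < complex.Re c.
Proof.
move=> h; split; first exact/ge0_ReE/ltW.
by move: h; case: c => a b; rewrite ltcE /= => /andP[_ ->].
Qed.
Lemma hnormE x : hnorm ip x = (vnorm x)%:C.
Proof. exact/ge0_ReE/hnorm_ge0. Qed.
Lemma cabsE z : `|z| = (cabs z)%:C.
Proof. exact/ge0_ReE/normr_ge0. Qed.
Lemma vnorm_ge0 x : 0 <= vnorm x.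
Proof. by have := hnorm_ge0 x; rewrite lecE => /andP[_]. Qed.
Lemma cabs_ge0 z : 0 <= cabs z.
Proof. by have := normr_ge0 z; rewrite lecE => /andP[_]. Qed.
Lemma ipxx_vnorm x : ip x x = (vnorm x)%:C ^+ 2.
Proof. by rewrite -hnorm_sq hnormE. Qed.
Lemma cauchy_schwarzR a b : cabs (ip a b) <= vnorm a * vnorm b.
Proof. by have := cauchy_schwarz a b; rewrite cabsE !hnormE -rmorphM lecR. Qed.
Lemma cabsD z w : cabs (z + w) <= cabs z + cabs w.
Proof. by have := ler_normD z w; rewrite !cabsE -rmorphD lecR. Qed.
Lemma cabsM z w : cabs (z * w) = cabs z * cabs w.
Proof. by apply: complexI; rewrite rmorphM -!cabsE normrM. Qed.
Lemma cabsJ z : cabs (z^*) = cabs z.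
Proof. by apply: complexI; rewrite -!cabsE norm_conjC. Qed.
Lemma cabsN z : cabs (- z) = cabs z.
Proof. by apply: complexI; rewrite -!cabsE normrN. Qed.
Lemma cabs0 : cabs 0 = 0.
Proof. by apply: complexI; rewrite -cabsE normr0. Qed.
Lemma cabs_eq0 z : cabs z = 0 -> z = 0.
Proof. by move=> h; apply/normr0_eq0; rewrite cabsE h. Qed.
Lemma cabsR (x : R) : cabs (x%:C) = `|x|.
Proof. by rewrite /cabs normc_def /= expr0n /= addr0 sqrtr_sqr. Qed.
Lemma Re_le_cabs z : complex.Re z <= cabs z.
Proof.
case: z => a b; rewrite /cabs normc_def /=.
apply: le_trans (ler_norm a) _; rewrite -sqrtr_sqr ler_sqrt ?addr_ge0 ?sqr_ge0 //.
by rewrite lerDl sqr_ge0.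
Qed.

Lemma eq0_cabs_small (z : R[i]) : (forall eps : R, 0 < eps -> cabs z <= eps) -> z = 0.
Proof.
move=> h; apply: cabs_eq0; apply/eqP; rewrite eq_le cabs_ge0 andbT.
by apply/ler_addgt0Pr => eps e0; rewrite add0r; exact: h.
Qed.

Lemma vnormN x : vnorm (- x) = vnorm x.
Proof. by rewrite /vnorm /hnorm ipNl ipNr opprK. Qed.
Lemma vnormB x y : vnorm (x - y) = vnorm (y - x).
Proof. by rewrite -vnormN opprB. Qed.

Lemma sq_vnormD x y : vnorm (x + y) ^+ 2 =
  vnorm x ^+ 2 + vnorm y ^+ 2 + 2 * complex.Re (ip x y).
Proof.
have sqRe z : vnorm z ^+ 2 = complex.Re (ip z z) by rewrite ipxx_vnorm -rmorphXn.
have ReJ (c : R[i]) : complex.Re (c^*) = complex.Re c by case: c.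
rewrite !sqRe ipDl !ipDr (ipC y x) !raddfD /= ReJ.
by rewrite mulr2n mulrDl mul1r; ring.
Qed.

Lemma vnormD x y : vnorm (x + y) <= vnorm x + vnorm y.
Proof.
have h1 := sq_vnormD x y.
have h2 := Re_le_cabs (ip x y); have h3 := cauchy_schwarzR x y.
have h4 := vnorm_ge0 (x + y); have h5 := vnorm_ge0 x; have h6 := vnorm_ge0 y.
have h7 : vnorm (x + y) ^+ 2 <= (vnorm x + vnorm y) ^+ 2 by rewrite h1; nra.
by rewrite -(ler_pXn2r (isT : (0 < 2)%N)) ?nnegrE ?addr_ge0.
Qed.

Lemma sq_vnorm_close a b :
  vnorm b ^+ 2 <= vnorm a ^+ 2 + (2 * vnorm a + vnorm (b - a)) * vnorm (b - a).
Proof.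
have := vnormD a (b - a); rewrite addrC subrK.
have := vnorm_ge0 b; have := vnorm_ge0 a; have := vnorm_ge0 (b - a).
move=> h1 h2 h3 h4; nra.
Qed.

Lemma parallelogram phi u v : vnorm (u - v) ^+ 2 + 4 * vnorm (phi - 2^-1 *: (u + v)) ^+ 2
  = 2 * vnorm (phi - u) ^+ 2 + 2 * vnorm (phi - v) ^+ 2.
Proof.
apply: complexI.
rewrite [LHS]rmorphD [RHS]rmorphD !(rmorphM _ _ (_ ^+ 2)) !rmorphXn !rmorph_nat.
rewrite -!ipxx_vnorm.
have c2 : (2^-1 : R[i])^* = 2^-1.
  by rewrite -[2 : R[i]](rmorph_nat (real_complex R)) -fmorphV conj_real.
rewrite !ipBl !ipBr !ipZl !ipZr !ipDl !ipDr c2.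
by field.
Qed.

Lemma hilbert_completeR (u : nat -> H) :
  (forall e : R, 0 < e -> exists N, forall m n, (N <= m)%N -> (N <= n)%N ->
     vnorm (u m - u n) < e) ->
  exists l, forall e : R, 0 < e -> exists N, forall n, (N <= n)%N -> vnorm (u n - l) < e.
Proof.
move=> h; case: hH => _ _ _ _ hc.
case: (hc u) => [eps /gt0_ReE [-> ep]|l hl].
  have [N hN] := h _ ep.
  by exists N => m n hm hn; rewrite hnormE ltcR; exact: hN.
exists l => e e0; have [|N hN] := hl (e%:C); first by rewrite ltcR.
by exists N => n hn; have := hN n hn; rewrite hnormE ltcR.
Qed.

Lemma small_factor (K eps : R) : 0 <= K -> 0 < eps ->
  exists d, [/\ 0 < d, d <= 1 & K * d <= eps].
Proof.
move=> K0 e0; have K1 : 0 < K + 1 by lra.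
exists (Num.min 1 (eps / (K + 1))); split.
- by rewrite lt_min ltr01 divr_gt0.
- by rewrite ge_min lexx.
- apply: le_trans (_ : (K + 1) * (eps / (K + 1)) <= eps).
    apply: le_trans (_ : (K + 1) * Num.min 1 (eps / (K + 1)) <= _).
      apply: ler_wpM2r; last lra.
      by rewrite le_min ler01 /= ltW // divr_gt0.
    by apply: ler_wpM2l; [lra|by rewrite ge_min lexx orbT].
  by rewrite mulrC divfK // gt_eqF.
Qed.

Lemma invS_small (d : R) : 0 < d -> exists N, forall n, (N <= n)%N -> (n.+1%:R)^-1 < d.
Proof.
move=> d0; exists (Num.truncn d^-1) => n hn.
rewrite invf_plt ?posrE ?ltr0Sn //.
by apply: lt_le_trans (truncnS_gt _) _; rewrite ler_nat.
Qed.

Lemma sq_vnorm_le_approx (a : H) (c : R) :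
  (forall eps : R, 0 < eps -> exists b, vnorm (a - b) < eps /\ vnorm b ^+ 2 <= c + eps) ->
  vnorm a ^+ 2 <= c.
Proof.
move=> happrox; apply/ler_addgt0Pr => eps e0.
have K0 : 0 <= 2 * vnorm a + 4 by have := vnorm_ge0 a; lra.
have [d [d0 d1 hd]] := small_factor _ _ K0 e0.
have [b [hab hb]] := happrox d d0.
have hclose := sq_vnorm_close b a.
have hba : vnorm b <= vnorm a + vnorm (a - b).
  by have := vnormD a (b - a); rewrite addrC subrK vnormB.
have t0 := vnorm_ge0 (a - b).
have herr : (2 * vnorm b + vnorm (a - b)) * vnorm (a - b) <= (2 * vnorm a + 3) * d.
  apply: le_trans (_ : (2 * vnorm a + 3) * vnorm (a - b) <= _).
    by apply: ler_wpM2r => //; lra.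
  by apply: ler_wpM2l; [have := vnorm_ge0 a; lra|exact: ltW].
lra.
Qed.

Lemma sq_vnorm_ge_approx (a : H) (c : R) :
  (forall eps : R, 0 < eps -> exists b, vnorm (a - b) < eps /\ c <= vnorm b ^+ 2) ->
  c <= vnorm a ^+ 2.
Proof.
move=> happrox; apply/ler_addgt0Pr => eps e0.
have K0 : 0 <= 2 * vnorm a + 1 by have := vnorm_ge0 a; lra.
have [d [d0 d1 hd]] := small_factor _ _ K0 e0.
have [b [hab hb]] := happrox d d0.
have hclose := sq_vnorm_close a b; rewrite vnormB in hclose.
have t0 := vnorm_ge0 (a - b).
have herr : (2 * vnorm a + vnorm (a - b)) * vnorm (a - b) <= (2 * vnorm a + 1) * d.
  apply: le_trans (_ : (2 * vnorm a + 1) * vnorm (a - b) <= _).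
    by apply: ler_wpM2r => //; lra.
  by apply: ler_wpM2l => //; exact: ltW.
lra.
Qed.

Lemma orth_of_min_dist (r w : H) :
  (forall t : R[i], vnorm r ^+ 2 <= vnorm (r - t *: w) ^+ 2) -> ip w r = 0.
Proof.
move=> hmin; set z := ip w r.
pose s : R := (vnorm w ^+ 2 + 1)^-1.
have s0 : 0 < s by rewrite invr_gt0; have := sqr_ge0 (vnorm w); lra.
have sW : s * vnorm w ^+ 2 <= 1.
  rewrite /s mulrC -ler_pdivlMr ?div1r ?invrK; [lra|].
  by rewrite invr_gt0; have := sqr_ge0 (vnorm w); lra.
(* minimality tested at [t = s z], with [s] small enough for the quadratic term *)
have sq_line : vnorm (r - ((s%:C) * z) *: w) ^+ 2
    = vnorm r ^+ 2 - 2 * s * cabs z ^+ 2 + s ^+ 2 * cabs z ^+ 2 * vnorm w ^+ 2.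
  apply: complexI.
  rewrite !(rmorphB, rmorphD) !(rmorphM _ _ (_ ^+ 2)) (rmorphM _ 2) !rmorphXn rmorph_nat.
  rewrite /= -!ipxx_vnorm -cabsE normCK.
  have cj : (s%:C * z)^* = s%:C * z^* by rewrite rmorphM /= conj_real.
  rewrite !ipBl !ipBr !ipZl !ipZr (ipC w r) -/z cj.
  ring.
have := hmin (s%:C * z); rewrite sq_line => h.
have A0 : 0 <= s * cabs z ^+ 2 by apply: mulr_ge0; [exact: ltW|exact: sqr_ge0].
have : cabs z ^+ 2 <= 0 by nra.
by move=> hA; apply: cabs_eq0; have := cabs_ge0 z; nra.
Qed.

Section Projection.
Variable S : set H.
Hypothesis S0 : S 0.
Hypothesis SDZ : forall a u w, S u -> S w -> S (a *: u + w).

Lemma min_dist_seq_cvg phi (d : R) (f : nat -> H) :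
  (forall w, S w -> d <= vnorm (phi - w) ^+ 2) ->
  (forall n, S (f n) /\ vnorm (phi - f n) ^+ 2 < d + n.+1%:R^-1) ->
  exists m, forall e : R, 0 < e -> exists N, forall n, (N <= n)%N -> vnorm (f n - m) < e.
Proof.
move=> dlb hf; apply: hilbert_completeR => e e0.
have cau n k : vnorm (f n - f k) ^+ 2 <= 2 * n.+1%:R^-1 + 2 * k.+1%:R^-1.
  have := parallelogram phi (f n) (f k).
  have Smid : S (2^-1 *: (f n + f k)).
    rewrite scalerDr; apply: SDZ; first by case: (hf n).
    by rewrite -[_ *: f k]addr0; apply: SDZ => //; case: (hf k).
  have := dlb _ Smid; have [_ hn] := hf n; have [_ hk] := hf k.
  move: (n.+1%:R^-1) (k.+1%:R^-1) hn hk => i j hn hk h1 h2; lra.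
have [|N hN] := invS_small (e ^+ 2 / 4); first by rewrite divr_gt0 ?exprn_gt0.
exists N => n k hn hk; have := cau n k; have := hN n hn; have := hN k hk.
move: (n.+1%:R^-1) (k.+1%:R^-1) => i j h1 h2 h3.
have h4 : vnorm (f n - f k) ^+ 2 < e ^+ 2 by lra.
by rewrite -(ltr_pXn2r (_ : (0 < 2)%N)) ?nnegrE ?vnorm_ge0 ?ltW.
Qed.

Lemma proj_closure phi : exists m,
  (forall e : R, 0 < e -> exists w, S w /\ vnorm (m - w) < e) /\
  (forall w, S w -> ip w (phi - m) = 0).
Proof.
pose E := [set r : R | exists w, S w /\ r = vnorm (phi - w) ^+ 2].
have hinf : has_inf E.
  by split; [exists (vnorm (phi - 0) ^+ 2), 0|exists 0 => r [w [_ ->]]; exact: sqr_ge0].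
pose d := inf E.
have dlb w : S w -> d <= vnorm (phi - w) ^+ 2.
  by move=> Sw; apply: (ge_inf hinf.2); exists w.
have /choice [f hf] n : exists w, S w /\ vnorm (phi - w) ^+ 2 < d + n.+1%:R^-1.
  have [|r [w [Sw ->]] hr] := inf_adherent (eps := n.+1%:R^-1) _ hinf.
    by rewrite invr_gt0 ltr0Sn.
  by exists w.
have [m hm] := min_dist_seq_cvg _ _ _ dlb hf.
exists m; split.
  move=> e e0; have [N hN] := hm e e0; exists (f N); split; first by case: (hf N).
  by rewrite vnormB; exact: hN.
move=> w Sw; apply: orth_of_min_dist => t.
have hmin : vnorm (phi - m) ^+ 2 <= d.
  apply: sq_vnorm_le_approx => e e0.
  have [N1 hN1] := hm e e0; have [N2 hN2] := invS_small _ e0.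
  pose n := maxn N1 N2; exists (phi - f n); split.
    by rewrite opprB addrC addrA subrK; apply: hN1; exact: leq_maxl.
  have [_ hn] := hf n; have := hN2 n (leq_maxr _ _).
  by move: (n.+1%:R^-1) hn => i hn; lra.
have hlb : d <= vnorm (phi - m - t *: w) ^+ 2.
  apply: sq_vnorm_ge_approx => e e0.
  have [N hN] := hm e e0; exists (phi - (t *: w + f N)); split.
    have -> : phi - m - t *: w - (phi - (t *: w + f N)) = f N - m.
      by rewrite opprB addrC !addrA subrK addrAC [t *: w + f N]addrC addrK.
    exact: hN.
  by apply: dlb; apply: SDZ => //; case: (hf N).
lra.
Qed.

End Projection.

Lemma linear_opB (S : H -> H) u v : is_linear_op S -> S (u - v) = S u - S v.
Proof. by move=> hS; rewrite [u - v]addrC -(scaleN1r v) hS scaleN1r addrC. Qed.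

Lemma bounded_opR (T : H -> H) : is_bounded_op ip T ->
  exists K : R, 0 <= K /\ forall u, vnorm (T u) <= K * vnorm u.
Proof.
case=> _ [M hM]; exists (cabs M); split; first exact: cabs_ge0.
move=> u; have h := hM u.
have hr : M * hnorm ip u \is Num.real.
  have -> : M * hnorm ip u = hnorm ip (T u) + (M * hnorm ip u - hnorm ip (T u)).
    by rewrite addrC subrK.
  by rewrite rpredD // ger0_real // ?hnorm_ge0 ?subr_ge0.
have := le_trans h (real_ler_norm hr).
by rewrite normrM (ger0_norm (hnorm_ge0 u)) cabsE !hnormE -rmorphM lecR.
Qed.

Lemma eq_on_dense {P : H -> Prop} {f g : H -> R[i]} {Kf Kg : R} :
  0 <= Kf -> 0 <= Kg ->
  (forall y (eps : R), 0 < eps -> exists z, P z /\ vnorm (y - z) < eps) ->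
  (forall u w, cabs (f u - f w) <= Kf * vnorm (u - w)) ->
  (forall u w, cabs (g u - g w) <= Kg * vnorm (u - w)) ->
  (forall z, P z -> f z = g z) -> forall y, f y = g y.
Proof.
move=> Kf0 Kg0 dP hf hg hfg y; apply/eqP; rewrite -subr_eq0; apply/eqP.
apply: eq0_cabs_small => eps e0.
have K0 : 0 <= Kf + Kg by lra.
have [dl [dl0 _ hdl]] := small_factor _ _ K0 e0.
have [z [Pz hz]] := dP y dl dl0.
have -> : f y - g y = (f y - f z) + (g z - g y) by rewrite (hfg z Pz) addrA subrK.
apply: le_trans (cabsD _ _) _.
have h1 := hf y z; have h2 := hg z y; rewrite vnormB in h2.
have h3 : Kf * vnorm (y - z) <= Kf * dl by apply: ler_wpM2l => //; exact: ltW.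
have h4 : Kg * vnorm (y - z) <= Kg * dl by apply: ler_wpM2l => //; exact: ltW.
lra.
Qed.

Lemma ipr_lipschitz c u w : cabs (ip c u - ip c w) <= vnorm c * vnorm (u - w).
Proof. by rewrite -ipBr; exact: cauchy_schwarzR. Qed.

Lemma ipl_lipschitz c u w : cabs (ip u c - ip w c) <= vnorm c * vnorm (u - w).
Proof. by rewrite -ipBl mulrC; exact: cauchy_schwarzR. Qed.

Definition oproj (o : seq H) (w : H) : H := \sum_(u <- o) ((ip u w) / (ip u u)) *: u.

Fixpoint pairwise_orth (o : seq H) : Prop :=
  if o is u :: o' then (forall w, w \in o' -> ip u w = 0) /\ pairwise_orth o' else True.

Lemma oproj_nil w : oproj [::] w = 0.
Proof. by rewrite /oproj big_nil. Qed.
Lemma oproj_cons u o w : oproj (u :: o) w = ((ip u w) / (ip u u)) *: u + oproj o w.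
Proof. by rewrite /oproj big_cons. Qed.

Lemma oprojDZ o a y z : oproj o (a *: y + z) = a *: oproj o y + oproj o z.
Proof.
elim: o => [|u o IH]; first by rewrite !oproj_nil scaler0 addr0.
by rewrite !oproj_cons IH ipr_linear mulrDl scalerDl scalerDr -mulrA -scalerA addrACA.
Qed.

Lemma ip_oproj_eq0 o z t : (forall u, u \in o -> ip z u = 0) -> ip z (oproj o t) = 0.
Proof.
elim: o => [|u o IH] h; first by rewrite oproj_nil ipr0.
rewrite oproj_cons ipDr ipZr h ?mem_head // mulr0 add0r IH //.
by move=> w wo; apply: h; rewrite in_cons wo orbT.
Qed.

Lemma oproj_eq0 o z : (forall u, u \in o -> ip u z = 0) -> oproj o z = 0.
Proof.
elim: o => [|u o IH] h; first by rewrite oproj_nil.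
rewrite oproj_cons h ?mem_head // mul0r scale0r add0r IH //.
by move=> w wo; apply: h; rewrite in_cons wo orbT.
Qed.

Lemma ip_oproj o t : pairwise_orth o -> forall w, w \in o -> ip w (oproj o t) = ip w t.
Proof.
elim: o => [|u o IH] //= [hu ho] w; rewrite in_cons => /orP [/eqP -> | wo].
  rewrite oproj_cons ipDr ipZr (@ip_oproj_eq0 _ u) // addr0.
  have [u0|uu0] := eqVneq (ip u u) 0; last by rewrite divfK.
  by rewrite (ipxx_eq0 _ u0) !ip0l !mul0r.
by rewrite oproj_cons ipDr ipZr IH // (ipC u w) (hu w wo) conjC0 mulr0 add0r.
Qed.

Lemma span_nil (w : H) : span_of [::] w -> w = 0.
Proof. by case=> c ->; rewrite big_ord0. Qed.

Lemma span0 (s : seq H) : span_of s 0.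
Proof. by exists (fun _ => 0); rewrite big1 // => i _; rewrite scale0r. Qed.

Lemma spanDZ (s : seq H) a u v : span_of s u -> span_of s v -> span_of s (a *: u + v).
Proof.
case=> c1 -> [c2 ->]; exists (fun i => a * c1 i + c2 i).
rewrite scaler_sumr -big_split /=; apply: eq_bigr => i _.
by rewrite scalerDl scalerA.
Qed.

Lemma span_cons (t : H) s w :
  span_of (t :: s) w <-> exists a w', span_of s w' /\ w = a *: t + w'.
Proof.
split.
  case=> c ->; exists (c ord0), (\sum_(i < size s) c (lift ord0 i) *: nth 0 s i).
  split; first by exists (fun i => c (lift ord0 i)).
  by rewrite big_ord_recl.
case=> a [w' [[c ->] ->]].
exists (fun i : 'I_(size s).+1 => if unlift ord0 i is Some k then c k else a).
rewrite big_ord_recl unlift_none /=; congr (_ + _).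
by apply: eq_bigr => i _; rewrite liftK.
Qed.

Lemma span_oproj (s : seq H) o :
  (forall u, u \in o -> span_of s u) -> forall t, span_of s (oproj o t).
Proof.
elim: o => [|u o IH] h t; first by rewrite oproj_nil; exact: span0.
rewrite oproj_cons; apply: spanDZ; first by apply: h; rewrite mem_head.
by apply: IH => w wo; apply: h; rewrite in_cons wo orbT.
Qed.

Lemma gram_schmidt (s : seq H) : exists o, [/\ (forall u, u \in o -> span_of s u),
  pairwise_orth o & (forall w, span_of s w -> oproj o w = w)].
Proof.
elim: s => [|t s [o [oin oorth orec]]].
  by exists [::]; split => // w /span_nil ->; rewrite oproj_nil.
set r := t - oproj o t.
have rperp u : u \in o -> ip u r = 0 by move=> uo; rewrite /r ipBr ip_oproj // subrr.
exists (r :: o); split.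
- move=> u; rewrite in_cons => /orP [/eqP -> | uo].
    apply/span_cons; exists 1, (- oproj o t); split; last by rewrite scale1r.
    rewrite -scaleN1r -[_ *: oproj o t]addr0; apply: spanDZ; [exact: span_oproj|exact: span0].
  by apply/span_cons; exists 0, u; split; [exact: oin|rewrite scale0r add0r].
- by split => // w wo; rewrite (ipC w r) rperp // conjC0.
- move=> w /span_cons [a [w' [sw' ->]]].
  set u := a *: oproj o t + w'.
  have su : span_of s u by apply: spanDZ => //; exact: span_oproj.
  have -> : a *: t + w' = a *: r + u by rewrite /u /r scalerBr addrA subrK.
  rewrite oproj_cons oprojDZ (orec _ su) (@oproj_eq0 _ r) // scaler0 add0r.
  have ru : ip r u = 0.
    rewrite -(orec _ su) (@ip_oproj_eq0 _ r) // => u' u'o.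
    by rewrite (ipC u' r) rperp // conjC0.
  rewrite ipr_linear ru addr0.
  have [r0|rr0] := eqVneq (ip r r) 0; last by rewrite mulfK.
  by rewrite (ipxx_eq0 _ r0) !scaler0.
Qed.

Section UnitaryRepresentation.
Variables (X : topologicalType) (mul : X -> X -> X) (inv : X -> X) (e : X).
Hypothesis hX : is_topological_group mul inv e.
Variable U : X -> H -> H.
Hypothesis hU : is_unitary_rep mul e ip U.

Lemma U_ip y u v : ip (U y u) (U y v) = ip u v.
Proof. by case: hU => /(_ y) [_ h _]. Qed.
Lemma vnormU y v : vnorm (U y v) = vnorm v.
Proof. by rewrite /vnorm /hnorm U_ip. Qed.
Lemma UB y u v : U y (u - v) = U y u - U y v.
Proof. by apply: linear_opB; case: hU => /(_ y) []. Qed.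

Lemma U_invK y v : U (inv y) (U y v) = v.
Proof.
case: hX => _ _ /(_ y) [hinv _] _ _; case: hU => _ he hm _.
by have := congr1 (fun f => f v) (hm (inv y) y); rewrite hinv he => /= <-.
Qed.
Lemma U_Kinv y v : U y (U (inv y) v) = v.
Proof.
case: hX => _ _ /(_ y) [_ hinv] _ _; case: hU => _ he hm _.
by have := congr1 (fun f => f v) (hm y (inv y)); rewrite hinv he => /= <-.
Qed.

Section SelfAdjoint.
Variables (domA : set H) (A : H -> H).
Hypothesis hA : is_selfadjoint ip domA A.

Lemma A_sym psi phi : domA psi -> domA phi -> ip psi (A phi) = ip (A psi) phi.
Proof. by case: hA => _ _ _ _; apply. Qed.
Lemma A_adjoint_dom psi :
  domA psi <-> exists eta, forall phi, domA phi -> ip psi (A phi) = ip eta phi.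
Proof. by case: hA => _ _ _ h _; apply: h. Qed.
Lemma A_dense y (eps : R) : 0 < eps -> exists z, domA z /\ vnorm (y - z) < eps.
Proof.
move=> e0; case: hA => _ _ h _ _.
have [|z [dz hz]] := h y (eps%:C); first by rewrite ltcR.
by exists z; split => //; move: hz; rewrite hnormE ltcR.
Qed.

Section Commutator.
Variables (y : X) (C : H -> H).
Hypothesis hC : is_commutator ip domA A (U y) C.

Lemma commutator_form phi psi : domA phi -> domA psi ->
  ip phi (C psi) = ip (A phi) (U y psi) - ip phi (U y (A psi)).
Proof. by case: hC => _; apply. Qed.

(* [U y eta] lies in [dom A = dom A^*], with [A (U y eta) = C eta + U y (A eta)]. *)
Lemma U_domA eta : domA eta -> domA (U y eta).
Proof.
move=> deta; apply/A_adjoint_dom; exists (C eta + U y (A eta)) => phi dphi.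
by rewrite (ipC (A phi)) (ipC phi (C eta + _)) ipDr (commutator_form _ _ dphi deta) subrK.
Qed.

Lemma commutator_sym_domA a b : domA a -> domA b ->
  ip (U y a) (C b) = ip (C a) (U y b).
Proof.
move=> da db.
rewrite (commutator_form _ _ (U_domA _ da) db) U_ip.
rewrite [ip (C a) _]ipC (commutator_form _ _ (U_domA _ db) da) U_ip.
rewrite rmorphB /= -!ipC.
by rewrite (A_sym _ _ (U_domA _ da) (U_domA _ db)) (A_sym _ _ da db).
Qed.

Lemma U_domA_dense z (eps : R) : 0 < eps ->
  exists z', (exists w, domA w /\ z' = U y w) /\ vnorm (z - z') < eps.
Proof.
move=> e0; have [w [dw hw]] := A_dense (U (inv y) z) _ e0.
exists (U y w); split; first by exists w.
by rewrite -{1}(U_Kinv y z) -UB vnormU.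
Qed.

Lemma commutator_sym a b : ip a (C (U (inv y) b)) = ip (C (U (inv y) a)) b.
Proof.
have [[Clin _] /bounded_opR [K [K0 hK]]] := (hC.1, hC.1).
have hCB u w : vnorm (C (U (inv y) u) - C (U (inv y) w)) <= K * vnorm (u - w).
  by rewrite -linear_opB // -UB -(vnormU (inv y) (u - w)); exact: hK.
have lipr c u w : cabs (ip c (C (U (inv y) u)) - ip c (C (U (inv y) w)))
    <= vnorm c * K * vnorm (u - w).
  apply: le_trans (ipr_lipschitz _ _ _) _; rewrite -mulrA.
  by apply: ler_wpM2l; [exact: vnorm_ge0|exact: hCB].
have lipl c u w : cabs (ip (C (U (inv y) u)) c - ip (C (U (inv y) w)) c)
    <= K * vnorm c * vnorm (u - w).
  rewrite -ipBl mulrAC; apply: le_trans (cauchy_schwarzR _ _) _.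
  by apply: ler_wpM2r; [exact: vnorm_ge0|exact: hCB].
have cK_ge0 c : 0 <= vnorm c * K by rewrite mulr_ge0 ?vnorm_ge0.
have Kc_ge0 c : 0 <= K * vnorm c by rewrite mulr_ge0 ?vnorm_ge0.
have sym_Udom a' b' : domA a' ->
    ip (U y a') (C (U (inv y) b')) = ip (C (U (inv y) (U y a'))) b'.
  move=> da'; apply: (eq_on_dense (f := fun b => ip (U y a') (C (U (inv y) b)))
    (g := ip (C (U (inv y) (U y a')))) (cK_ge0 _) (vnorm_ge0 _) U_domA_dense (lipr _)).
    exact: ipr_lipschitz.
  by move=> _ [w [dw ->]]; rewrite /= !U_invK commutator_sym_domA.
apply: (eq_on_dense (f := ip^~ (C (U (inv y) b))) (g := fun a => ip (C (U (inv y) a)) b)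
  (vnorm_ge0 _) (Kc_ge0 _) U_domA_dense _ (lipl _)).
  exact: ipl_lipschitz.
by move=> _ [w [dw ->]]; exact: sym_Udom.
Qed.

End Commutator.

Section Net.
Variables (l : X -> R) (J : Type) (le : J -> J -> Prop).
Hypothesis hJ : is_directed le.
Variable x : J -> X.
Hypothesis l_unbounded : forall M : R, exists j0, forall j, le j0 j -> M < l (x j).
Variable Cm : J -> H -> H.
Hypothesis hCm : forall j, is_commutator ip domA A (U (x j)) (Cm j).
Variable D : H -> H.
Hypothesis hD : net_slim le ip
  (fun j psi => (real_complex R (l (x j))^-1) *: Cm j (U (inv (x j)) psi)) D.

Definition ultimately (P : J -> Prop) := exists j0, forall j, le j0 j -> P j.

Lemma ultimately_and P Q :
  ultimately P -> ultimately Q -> ultimately (fun j => P j /\ Q j).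
Proof.
case: hJ => _ _ htr hup [j1 h1] [j2 h2]; have [k [k1 k2]] := hup j1 j2.
by exists k => j kj; split; [apply: h1; apply: htr kj|apply: h2; apply: htr kj].
Qed.
Lemma ultimately_exists P : ultimately P -> exists j, P j.
Proof. by case: hJ => _ hr _ _ [j0 h]; exists j0; apply: h. Qed.
Lemma ultimatelyT (P : J -> Prop) : (forall j, P j) -> ultimately P.
Proof. by case: hJ => [[j0 _] _ _ _] h; exists j0. Qed.
Arguments ultimately_and {P Q}.
Arguments ultimately_exists {P}.

Definition T j b := ((l (x j))^-1)%:C *: Cm j (U (inv (x j)) b).

Lemma T_sym j a b : ip a (T j b) = ip (T j a) b.
Proof. by rewrite /T ipZr ipZl conj_real (commutator_sym _ _ (hCm j)). Qed.

Lemma T_cvg psi (eps : R) : 0 < eps -> ultimately (fun j => vnorm (T j psi - D psi) < eps).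
Proof.
move=> e0; have [|j0 h] := hD psi (eps%:C); first by rewrite ltcR.
by exists j0 => j /h; rewrite hnormE ltcR.
Qed.

Lemma D_sym a b : ip a (D b) = ip (D a) b.
Proof.
apply/eqP; rewrite -subr_eq0; apply/eqP; apply: eq0_cabs_small => eps e0.
have K0 : 0 <= vnorm a + vnorm b by rewrite addr_ge0 ?vnorm_ge0.
have [dl [dl0 _ hdl]] := small_factor _ _ K0 e0.
have [j [h1 h2]] := ultimately_exists (ultimately_and (T_cvg b _ dl0) (T_cvg a _ dl0)).
have -> : ip a (D b) - ip (D a) b = - ip a (T j b - D b) + ip (T j a - D a) b.
  by rewrite ipBr ipBl T_sym; ring.
apply: le_trans (cabsD _ _) _; rewrite cabsN.
have c1 := cauchy_schwarzR a (T j b - D b); have c2 := cauchy_schwarzR (T j a - D a) b.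
have := vnorm_ge0 a; have := vnorm_ge0 b; have := vnorm_ge0 (T j b - D b).
have := vnorm_ge0 (T j a - D a).
nra.
Qed.

Definition decays phi := forall psi (eps : R), 0 < eps ->
  ultimately (fun j => cabs (ip phi (U (x j) psi)) < eps).

Lemma decays0 : decays 0.
Proof. by move=> psi eps e0; apply: ultimatelyT => j; rewrite ip0l cabs0. Qed.

Lemma decaysDZ a u w : decays u -> decays w -> decays (a *: u + w).
Proof.
move=> du dw psi eps e0.
have K0 : 0 <= cabs a + 1 by have := cabs_ge0 a; lra.
have [dl [dl0 _ hdl]] := small_factor _ _ K0 e0.
have [j0 h] := ultimately_and (du psi dl dl0) (dw psi dl dl0).
exists j0 => j /h [h1 h2].
rewrite ipDl ipZl; apply: le_lt_trans (cabsD _ _) _; rewrite cabsM cabsJ.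
have := cabs_ge0 a; have := cabs_ge0 (ip u (U (x j) psi)); nra.
Qed.

Lemma decays_closed phi :
  (forall eps : R, 0 < eps -> exists w, decays w /\ vnorm (phi - w) < eps) -> decays phi.
Proof.
move=> hc psi eps e0.
have K0 : 0 <= vnorm psi + 1 by have := vnorm_ge0 psi; lra.
have [dl [dl0 _ hdl]] := small_factor _ _ K0 e0.
have [w [dw hw]] := hc dl dl0.
have [j0 h] := dw psi dl dl0.
exists j0 => j /h h1.
rewrite -(subrK w phi) ipDl; apply: le_lt_trans (cabsD _ _) _.
have := cauchy_schwarzR (phi - w) (U (x j) psi); rewrite vnormU => h2.
have := vnorm_ge0 psi; have := vnorm_ge0 (phi - w); nra.
Qed.

(* For [v, psi] in [dom A], the symmetry of [T j] turns the coefficient into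
   [l (x j)^-1 (<A v, U psi> - <v, U (A psi)>)], which is O(1 / l (x j)). *)
Lemma T_coeff_decay v psi : domA v -> domA psi -> forall eps : R, 0 < eps ->
  ultimately (fun j => cabs (ip (T j v) (U (x j) psi)) < eps).
Proof.
move=> dv dpsi eps e0.
set B := vnorm (A v) * vnorm psi + vnorm v * vnorm (A psi).
have B0 : 0 <= B by rewrite /B addr_ge0 ?mulr_ge0 ?vnorm_ge0.
have [j0 hj0] := l_unbounded (B / eps).
exists j0 => j /hj0; rewrite ltr_pdivrMr // => hl.
have lpos : 0 < l (x j) by rewrite -(pmulr_lgt0 _ e0); apply: le_lt_trans hl.
rewrite -T_sym /T ipZr U_invK (commutator_form _ _ (hCm j) _ _ dv dpsi).
rewrite cabsM cabsR ger0_norm ?invr_ge0 ?ltW // ltr_pdivrMl //.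
apply: le_lt_trans hl; apply: le_trans (cabsD _ _) _; rewrite cabsN.
have := cauchy_schwarzR (A v) (U (x j) psi); have := cauchy_schwarzR v (U (x j) (A psi)).
by rewrite !vnormU /B; lra.
Qed.

Lemma decays_D_domA v : domA v -> decays (D v).
Proof.
move=> dv psi eps e0.
have e3 : 0 < eps / 3 by lra.
have [d1 [d10 _ hd1]] := small_factor _ _ (vnorm_ge0 (D v)) e3.
have [psi' [dpsi' hpsi']] := A_dense psi _ d10.
have [d2 [d20 _ hd2]] := small_factor _ _ (vnorm_ge0 psi') e3.
have [j0 hj0] := ultimately_and (T_cvg v _ d20) (T_coeff_decay _ _ dv dpsi' _ e3).
exists j0 => j /hj0 [h1 h2].
have -> : ip (D v) (U (x j) psi) = ip (D v) (U (x j) (psi - psi'))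
    + ip (D v - T j v) (U (x j) psi') + ip (T j v) (U (x j) psi').
  by rewrite UB ipBr ipBl; ring.
apply: le_lt_trans (cabsD _ _) _; apply: le_lt_trans (lerD (cabsD _ _) (lexx _)) _.
have a1 := cauchy_schwarzR (D v) (U (x j) (psi - psi')); rewrite vnormU in a1.
have a2 := cauchy_schwarzR (D v - T j v) (U (x j) psi'); rewrite vnormU vnormB in a2.
have p1 : vnorm (D v) * vnorm (psi - psi') <= vnorm (D v) * d1.
  by apply: ler_wpM2l; [exact: vnorm_ge0|exact: ltW].
have p2 : vnorm (T j v - D v) * vnorm psi' <= d2 * vnorm psi'.
  by apply: ler_wpM2r; [exact: vnorm_ge0|exact: ltW].
lra.
Qed.

(* The decaying vectors form a closed subspace; its orthogonal complement is
   killed by [D], as [D] is symmetric and [D (dom A)] decays. *)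
Lemma ker_perp_decays phi : ker_perp ip D phi -> decays phi.
Proof.
move=> hk.
have [m [hm horth]] := proj_closure _ decays0 decaysDZ phi.
set r := phi - m in horth *.
have Dr0 : D r = 0.
  apply: ipxx_eq0; apply: eq0_cabs_small => eps e0.
  have [dl [dl0 _ hdl]] := small_factor _ _ (vnorm_ge0 (D r)) e0.
  have [v [dv hv]] := A_dense (D r) _ dl0.
  have -> : ip (D r) (D r) = ip (D r - v) (D r).
    by rewrite ipBl (D_sym v r) (horth _ (decays_D_domA _ dv)) subr0.
  apply: le_trans (cauchy_schwarzR _ _) _.
  by have := vnorm_ge0 (D r); have := vnorm_ge0 (D r - v); nra.
have hmr : ip m r = 0.
  apply: eq0_cabs_small => eps e0.
  have [dl [dl0 _ hdl]] := small_factor _ _ (vnorm_ge0 r) e0.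
  have [w [dw hw]] := hm dl dl0.
  rewrite -(subrK w m) ipDl (horth w dw) addr0.
  apply: le_trans (cauchy_schwarzR _ _) _.
  by have := vnorm_ge0 r; have := vnorm_ge0 (m - w); nra.
have r0 : r = 0.
  by apply: ipxx_eq0; rewrite {2}/r ipBr (hk _ Dr0) (ipC m r) hmr conjC0 subr0.
apply: decays_closed => eps e0; have [w [dw hw]] := hm eps e0; exists w; split => //.
by move/eqP: r0; rewrite /r subr_eq0 => /eqP ->.
Qed.

Lemma decays_net_cvgC phi psi :
  decays phi -> net_cvgC le (fun j => ip phi (U (x j) psi)) 0.
Proof.
move=> dphi eps /gt0_ReE [-> ep]; have [j0 h] := dphi psi _ ep.
by exists j0 => j /h; rewrite subr0 cabsE ltcR.
Qed.

Lemma oproj_coeff_decay (v : H) (o : seq H) : (forall u, u \in o -> decays u) ->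
  forall eps : R, 0 < eps -> ultimately
    (fun j => cabs (\sum_(u <- o) (ip u (U (x j) v) / ip u u * ip (U (x j) v) u)) < eps).
Proof.
elim: o => [|u o IH] hd eps e0.
  by apply: ultimatelyT => j; rewrite big_nil cabs0.
have e2 : 0 < eps / 2 by lra.
set c := cabs ((ip u u)^-1) * (vnorm v * vnorm u).
have K0 : 0 <= c + 1 by rewrite /c addr_ge0 ?mulr_ge0 ?cabs_ge0 ?vnorm_ge0.
have [dl [dl0 _ hdl]] := small_factor _ _ K0 e2.
have hd' w : w \in o -> decays w by move=> wo; apply: hd; rewrite in_cons wo orbT.
have [j0 h] := ultimately_and (hd u (mem_head _ _) v _ dl0) (IH hd' _ e2).
exists j0 => j /h [h1 h2].
rewrite big_cons; apply: le_lt_trans (cabsD _ _) _; rewrite !cabsM.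
have := cauchy_schwarzR (U (x j) v) u; rewrite vnormU => h3.
have p1 : cabs (ip u (U (x j) v)) * cabs (ip u u)^-1 * cabs (ip (U (x j) v) u)
    <= cabs (ip u (U (x j) v)) * cabs (ip u u)^-1 * (vnorm v * vnorm u).
  by apply: ler_wpM2l => //; rewrite mulr_ge0 ?cabs_ge0.
have p2 : cabs (ip u (U (x j) v)) * cabs (ip u u)^-1 * (vnorm v * vnorm u) <= dl * c.
  rewrite /c (mulrA dl); apply: ler_wpM2r; first by rewrite mulr_ge0 ?vnorm_ge0.
  by apply: ler_wpM2r; [exact: cabs_ge0|exact: (ltW h1)].
lra.
Qed.

(* Expanding [U (x j) v] in an orthogonal basis of the invariant span writes
   [<v, v>] as a sum of products of decaying coefficients. *)
Lemma no_invariant_span : ~ (exists s : seq H,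
       (exists v, span_of s v /\ v <> 0) /\
       span_of s `<=` ker_perp ip D /\
       (forall (y : X) (v : H), span_of s v -> span_of s (U y v))).
Proof.
case=> s [[v [sv v0]] [sk sinv]]; apply: v0.
have [o [oin oorth orec]] := gram_schmidt s.
have od u : u \in o -> decays u by move=> uo; apply/ker_perp_decays/sk/oin.
have vv j : ip v v = \sum_(u <- o) (ip u (U (x j) v) / ip u u * ip (U (x j) v) u).
  rewrite -(U_ip (x j) v v) -{2}(orec _ (sinv (x j) v sv)) /oproj ip_sumr.
  by apply: eq_bigr => u _; rewrite ipZr.
apply: ipxx_eq0; apply: eq0_cabs_small => eps e0.
have [j hj] := ultimately_exists (oproj_coeff_decay v _ od _ e0).
by rewrite (vv j); exact: ltW.
Qed.

Lemma decay_and_no_finite_subrep :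
  (forall phi psi, ker_perp ip D phi -> net_cvgC le (fun j => ip phi (U (x j) psi)) 0)
  /\ ~ (exists s : seq H,
       (exists v, span_of s v /\ v <> 0) /\
       span_of s `<=` ker_perp ip D /\
       (forall (y : X) (v : H), span_of s v -> span_of s (U y v))).
Proof.
split; last exact: no_invariant_span.
by move=> phi psi /ker_perp_decays; exact: decays_net_cvgC.
Qed.

End Net.
End SelfAdjoint.
End UnitaryRepresentation.
End InnerProduct.

(* If [l] stayed bounded by [M] along a cofinal subnet, the compact set
   [closure (l @^-1` [0, M])] would contain a cluster point of the net. *)
Lemma length_net_unbounded {R : realType} {X : topologicalType} {mul : X -> X -> X}
    {inv : X -> X} {e : X} {l : X -> R} (hl : is_proper_length mul inv e l)
    {J : Type} {le : J -> J -> Prop} (hJ : is_directed le)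
    {x : J -> X} (hx : net_diverges le x) (M : R) :
  exists j0, forall j, le j0 j -> M < l (x j).
Proof.
apply: contrapT => hno.
have hfreq j0 : exists j, le j0 j /\ l (x j) <= M.
  apply: contrapT => h; apply: hno; exists j0 => j hj.
  by rewrite ltNge; apply/negP => hle; apply: h; exists j.
case: hl => l0 _ _ _ hK; case: hJ => [[j00 _] _ htr hup].
pose B j := [set y | exists k, le j k /\ l (x k) <= M /\ y = x k].
have FF : Filter (filter_from [set: J] B).
  apply: filter_fromT_filter; first by exists j00.
  move=> i j; have [k [ik jk]] := hup i j; exists k => y [k' [kk' [hk' ->]]].
  by split; exists k'; split => //; apply: htr kk'.
have PF : ProperFilter (filter_from [set: J] B).
  apply: filter_from_proper => i _; have [k [ik hk]] := hfreq i.
  by exists (x k); exists k.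
have Kc : compact (closure (l @^-1` `[0, M])).
  apply: (hK _ (@segment_compact _ 0 M)).
  by move=> r; rewrite /= in_itv /= => /andP[].
have FK : filter_from [set: J] B (closure (l @^-1` `[0, M])).
  exists j00 => // y [k [_ [hk ->]]]; apply: subset_closure.
  by rewrite /= in_itv /= l0 hk.
have [p [_ cp]] := Kc _ PF FK.
apply: hx; exists p => N hN j.
have [y [[k [jk [_ ->]]] Ny]] := cp _ _ (@in_filter_from _ _ [set: J] B j I) hN.
by exists k.
Qed.

Theorem theorem2p3
  (R : realType)
  (X : topologicalType) (mul : X -> X -> X) (inv : X -> X) (e : X)
  (hX : is_topological_group mul inv e)
  (l : X -> R) (hl : is_proper_length mul inv e l)
  (H : lmodType R[i]) (ip : H -> H -> R[i]) (hH : is_hilbert ip)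
  (U : X -> H -> H) (hU : is_unitary_rep mul e ip U)
  (J : Type) (le : J -> J -> Prop) (hJ : is_directed le)
  (x : J -> X) (hx : net_diverges le x)
  (domA : set H) (A : H -> H) (hA : is_selfadjoint ip domA A)
  (hC1 : forall j, in_C1 ip domA A (U (x j)))
  (Cm : J -> H -> H) (hCm : forall j, is_commutator ip domA A (U (x j)) (Cm j))
  (D : H -> H)
  (hD : net_slim le ip
          (fun j psi => (real_complex R (l (x j))^-1) *: Cm j (U (inv (x j)) psi)) D) :
  (forall phi psi, ker_perp ip D phi ->
      net_cvgC le (fun j => ip phi (U (x j) psi)) 0)
  /\
  ~ (exists s : seq H,
       (exists v, span_of s v /\ v <> 0) /\
       span_of s `<=` ker_perp ip D /\
       (forall (y : X) (v : H), span_of s v -> span_of s (U y v))).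
Proof.
have l_unbounded := length_net_unbounded hl hJ hx.
by apply: decay_and_no_finite_subrep; eassumption.
Qed.
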